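(* Let $A \in \mathbb{R}_+^{m\times n}$ be a matrix with nonnegative entries, let $y \in \mathbb{Z}_+^m$, let $\beta>0$, and define $F(f) = \mathbb{1}^T A f - \sum_{i=1}^m y_i \log(e_i^T A f + \beta)$ for $f \in \mathbb{R}_+^n$, where $\mathbb{1}$ is the all-ones vector in $\mathbb{R}^m$ and $e_i$ is the $i$-th canonical basis vector. Then $F$ is Lipschitz continuously differentiable on $\mathbb{R}_+^n$, with the Lipschitz constant $L$ of $\nabla F$ on $\mathbb{R}_+^n$ satisfying $$L \le \frac{\max(y)}{\beta^2}\,\|A\|_2^2 \le \frac{\max(y)}{\beta^2}\,\max(A^T\mathbb{1})\,\max(A\mathbb{1}),$$ where $\max(v)$ denotes the largest entry of a vector $v$ (and in $A^T\mathbb{1}$ the vector $\mathbb{1}$ is the all-ones vector of $\mathbb{R}^m$, in $A\mathbb{1}$ of $\mathbb{R}^n$).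
   Context: $\|A\|_2$ denotes the spectral norm of $A$. $F$ is the negative Poisson log-likelihood (up to constants) with a small offset $\beta$. *)

From HB Require Import structures.
From mathcomp Require Import all_boot all_order all_algebra.
From mathcomp Require Import all_classical all_reals all_analysis.
Set Implicit Arguments. Unset Strict Implicit. Unset Printing Implicit Defensive.
Import Order.TTheory GRing.Theory Num.Theory.
Import numFieldNormedType.Exports.
Local Open Scope classical_set_scope.
Local Open Scope ring_scope.

Definition norm2 {R : realType} {n : nat} (v : 'cV[R]_n) : R :=
  Num.sqrt (\sum_(i < n) v i 0 ^+ 2).

Definition specnorm {R : realType} {m n : nat} (A : 'M[R]_(m, n)) : R :=
  sup [set norm2 (A *m x) | x in [set x : 'cV[R]_n | norm2 x <= 1]].

Definition nonneg_vec {R : realType} {n : nat} (f : 'cV[R]_n) : Prop :=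
  forall j, 0 <= f j 0.

Definition poissonF {R : realType} {m n : nat} (A : 'M[R]_(m, n))
  (y : 'I_m -> nat) (beta : R) (f : 'cV[R]_n) : R :=
  \sum_(i < m) (A *m f) i 0 - \sum_(i < m) (y i)%:R * ln ((A *m f) i 0 + beta).

Definition grad {R : realType} {n : nat} (F : 'cV[R]_n -> R) (f : 'cV[R]_n)
  : 'cV[R]_n :=
  \col_(j < n) ('d F f (delta_mx j 0 : 'cV[R]_n)).

Definition grad_lip_on_nonneg {R : realType} {n : nat} (F : 'cV[R]_n -> R) (c : R)
  : Prop :=
  0 <= c /\ forall f g : 'cV[R]_n, nonneg_vec f -> nonneg_vec g ->
    norm2 (grad F f - grad F g) <= c * norm2 (f - g).

Definition grad_lip_const {R : realType} {n : nat} (F : 'cV[R]_n -> R) : R :=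
  inf [set c | grad_lip_on_nonneg F c].

(* max entry of a column vector with nonnegative entries (0 for the empty vector) *)
Definition vmax {R : realType} {k : nat} (v : 'cV[R]_k) : R :=
  \big[Num.max/0]_(i < k) v i 0.

Definition ones {R : realType} (k : nat) : 'cV[R]_k := const_mx 1.

From HB Require Import structures.
From mathcomp Require Import all_boot all_order all_algebra.
From mathcomp Require Import all_classical all_reals all_analysis.
From mathcomp Require Import ring.
Import Order.TTheory GRing.Theory Num.Theory.
Import numFieldNormedType.Exports.
Local Open Scope classical_set_scope.
Local Open Scope ring_scope.
Set Implicit Arguments. Unset Strict Implicit.

(* Write F(f) = sum_i psi_i ((A f)_i) with psi_i(x) = x - y_i ln (x + beta).  Then
   grad F f = A^T d(f) with d_i(f) = psi_i'((A f)_i), and psi_i' = 1 - y_i / (x + beta) is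
   (y_i / beta^2)-Lipschitz on [0, oo), where (A f)_i lives when f >= 0 and A >= 0.  Hence
   ||grad F f - grad F g|| <= ||A|| ||d(f) - d(g)|| <= ||A|| (max y / beta^2) ||A (f - g)||
                           <= (max y / beta^2) ||A||^2 ||f - g||.
   The second inequality is the Schur test ||A||^2 <= (max column sum) (max row sum) for a
   nonnegative matrix, obtained from the weighted Cauchy-Schwarz inequality in each row. *)

Section Euclidean_norm.
Variable R : realType.

Lemma sumr_sqr_ge0 k (u : 'I_k -> R) : 0 <= \sum_i u i ^+ 2.
Proof. by apply: sumr_ge0 => i _; exact: sqr_ge0. Qed.

Lemma norm2_ge0 k (v : 'cV[R]_k) : 0 <= norm2 v.
Proof. exact: sqrtr_ge0. Qed.

Lemma norm2_sqr k (v : 'cV[R]_k) : norm2 v ^+ 2 = \sum_i v i 0 ^+ 2.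
Proof. by rewrite /norm2 sqr_sqrtr // sumr_sqr_ge0. Qed.

Lemma norm2_0 k : norm2 (0 : 'cV[R]_k) = 0.
Proof. by rewrite /norm2 big1 ?sqrtr0 // => i _; rewrite mxE expr0n. Qed.

Lemma norm2_eq0 k (v : 'cV[R]_k) : norm2 v = 0 -> v = 0.
Proof.
move=> /eqP; rewrite sqrtr_eq0 => sum_le0.
have sum0 : \sum_i v i 0 ^+ 2 = 0 by apply/eqP; rewrite eq_le sum_le0 sumr_sqr_ge0.
apply/matrixP => i j; rewrite (ord1 j) mxE.
have /eqP := psumr_eq0P (fun i _ => sqr_ge0 (v i 0)) sum0 (i := i) isT.
by rewrite sqrf_eq0 => /eqP.
Qed.

Lemma norm2Z k (v : 'cV[R]_k) c : norm2 (c *: v) = `|c| * norm2 v.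
Proof.
rewrite /norm2 -sqrtr_sqr -sqrtrM ?sqr_ge0 // mulr_sumr; congr Num.sqrt.
by apply: eq_bigr => i _; rewrite mxE exprMn.
Qed.

Lemma norm2_le_pointwise k (u v : 'cV[R]_k) c : 0 <= c ->
  (forall i, `|u i 0| <= c * `|v i 0|) -> norm2 u <= c * norm2 v.
Proof.
move=> c0 uv; rewrite /norm2 -(ger0_norm c0) -sqrtr_sqr -sqrtrM ?sqr_ge0 //.
rewrite ler_sqrt; last by rewrite mulr_ge0 ?sqr_ge0 ?sumr_sqr_ge0.
rewrite mulr_sumr; apply: ler_sum => i _.
rewrite -exprMn -real_normK ?num_real // -[leRHS]real_normK ?num_real //.
by rewrite ler_sqr ?nnegrE ?normr_ge0 // normrM (ger0_norm c0).
Qed.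

(* Lagrange's identity: the defect of Cauchy-Schwarz is half a sum of squares. *)
Lemma cauchy_schwarz_sum k (u v : 'I_k -> R) :
  (\sum_i u i * v i) ^+ 2 <= (\sum_i u i ^+ 2) * (\sum_i v i ^+ 2).
Proof.
have lagrange : \sum_i \sum_j (u i * v j - u j * v i) ^+ 2 =
    2 * ((\sum_i u i ^+ 2) * (\sum_i v i ^+ 2) - (\sum_i u i * v i) ^+ 2).
  have expand : \sum_i \sum_j (u i * v j - u j * v i) ^+ 2 =
      \sum_i \sum_j (u i ^+ 2 * v j ^+ 2) + \sum_i \sum_j (u j ^+ 2 * v i ^+ 2)
      - 2 * \sum_i \sum_j (u i * v i * (u j * v j)).
    rewrite mulr_sumr -big_split -sumrB /=; apply: eq_bigr => i _.
    by rewrite mulr_sumr -big_split -sumrB /=; apply: eq_bigr => j _; ring.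
  have uv_sum : \sum_i \sum_j (u i ^+ 2 * v j ^+ 2) = (\sum_i u i ^+ 2) * (\sum_i v i ^+ 2).
    by rewrite mulr_suml; apply: eq_bigr => i _; rewrite mulr_sumr.
  have vu_sum : \sum_i \sum_j (u j ^+ 2 * v i ^+ 2) = (\sum_i u i ^+ 2) * (\sum_i v i ^+ 2).
    rewrite mulrC mulr_suml; apply: eq_bigr => i _; rewrite mulr_sumr.
    by apply: eq_bigr => j _; rewrite mulrC.
  have dot_sqr : \sum_i \sum_j (u i * v i * (u j * v j)) = (\sum_i u i * v i) ^+ 2.
    by rewrite expr2 mulr_suml; apply: eq_bigr => i _; rewrite mulr_sumr.
  by rewrite expand uv_sum vu_sum dot_sqr; ring.
have : 0 <= \sum_i \sum_j (u i * v j - u j * v i) ^+ 2.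
  by apply: sumr_ge0 => i _; apply: sumr_ge0 => j _; exact: sqr_ge0.
by rewrite lagrange pmulr_rge0 // subr_ge0.
Qed.

Lemma cauchy_schwarz_norm2 k (u v : 'cV[R]_k) :
  `|\sum_i u i 0 * v i 0| <= norm2 u * norm2 v.
Proof.
rewrite -sqrtrM ?sumr_sqr_ge0 // -sqrtr_sqr ler_sqrt; last first.
  by rewrite mulr_ge0 ?sumr_sqr_ge0.
exact: cauchy_schwarz_sum.
Qed.

Lemma cauchy_schwarz_weighted k (a x : 'I_k -> R) : (forall j, 0 <= a j) ->
  (\sum_j a j * x j) ^+ 2 <= (\sum_j a j) * (\sum_j a j * x j ^+ 2).
Proof.
move=> a_ge0.
have := cauchy_schwarz_sum (fun j => Num.sqrt (a j)) (fun j => Num.sqrt (a j) * x j).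
under eq_bigr do rewrite mulrA -expr2 sqr_sqrtr //.
under [X in _ <= X * _]eq_bigr do rewrite sqr_sqrtr //.
by under [X in _ <= _ * X]eq_bigr do rewrite exprMn sqr_sqrtr //.
Qed.

Lemma vmax_ge k (v : 'cV[R]_k) i : v i 0 <= vmax v.
Proof. by apply/bigmax_geP; right; exists i. Qed.

Lemma vmax_ge0 k (v : 'cV[R]_k) : 0 <= vmax v.
Proof. by apply/bigmax_geP; left. Qed.

End Euclidean_norm.

Section Spectral_norm.
Variables (R : realType) (m n : nat) (A : 'M[R]_(m, n)).

Let image_ball := [set norm2 (A *m x) | x in [set x : 'cV[R]_n | norm2 x <= 1]].

Lemma norm2_mulmx_frobenius (x : 'cV[R]_n) :
  norm2 (A *m x) ^+ 2 <= (\sum_i \sum_j A i j ^+ 2) * norm2 x ^+ 2.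
Proof.
rewrite !norm2_sqr mulr_suml; apply: ler_sum => i _; rewrite mxE.
exact: cauchy_schwarz_sum (fun j => A i j) (fun j => x j 0).
Qed.

Lemma image_ball_ubound : ubound image_ball (Num.sqrt (\sum_i \sum_j A i j ^+ 2)).
Proof.
have frob_ge0 : 0 <= \sum_i \sum_j A i j ^+ 2.
  by apply: sumr_ge0 => i _; exact: sumr_sqr_ge0.
move=> _ [x /= x_le1 <-].
rewrite -[norm2 _]ger0_norm ?norm2_ge0 // -sqrtr_sqr ler_sqrt //.
apply: (le_trans (norm2_mulmx_frobenius x)); rewrite -[leRHS]mulr1.
apply: ler_wpM2l => //; rewrite -[1](expr1n _ 2).
by rewrite ler_sqr ?nnegrE ?norm2_ge0.
Qed.

Lemma image_ball0 : image_ball 0.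
Proof. by exists 0; rewrite /= ?norm2_0 ?ler01 // mulmx0 norm2_0. Qed.

Let image_ball_has_sup : has_sup image_ball.
Proof. by split; [exists 0; exact: image_ball0 | eexists; exact: image_ball_ubound]. Qed.

Lemma specnorm_ge0 : 0 <= specnorm A.
Proof. exact: (ub_le_sup image_ball_has_sup.2 image_ball0). Qed.

Lemma norm2_mulmx_le (x : 'cV[R]_n) : norm2 (A *m x) <= specnorm A * norm2 x.
Proof.
have [/norm2_eq0 ->|x_neq0] := eqVneq (norm2 x) 0.
  by rewrite mulmx0 !norm2_0 mulr0.
have x_gt0 : 0 < norm2 x by rewrite lt0r x_neq0 norm2_ge0.
have unit_x : norm2 ((norm2 x)^-1 *: x) = 1.
  by rewrite norm2Z ger0_norm ?invr_ge0 ?norm2_ge0 // mulVf.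
have unit_in : image_ball (norm2 (A *m ((norm2 x)^-1 *: x))).
  by exists ((norm2 x)^-1 *: x); rewrite //= unit_x.
have := ub_le_sup image_ball_has_sup.2 unit_in.
rewrite -scalemxAr norm2Z ger0_norm ?invr_ge0 ?norm2_ge0 //.
by rewrite ler_pdivrMl // mulrC.
Qed.

(* ||A^T d||^2 = <d, A A^T d> <= ||d|| ||A|| ||A^T d||. *)
Lemma norm2_trmx_mulmx_le (d : 'cV[R]_m) : norm2 (A^T *m d) <= specnorm A * norm2 d.
Proof.
set w := A^T *m d.
have w_sqr : norm2 w ^+ 2 = \sum_i d i 0 * (A *m w) i 0.
  rewrite norm2_sqr; under eq_bigr do rewrite expr2 {2}/w mxE mulr_sumr.
  rewrite exchange_big /=; apply: eq_bigr => i _.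
  by rewrite mxE mulr_sumr; apply: eq_bigr => j _; rewrite !mxE; ring.
have w_sqr_le : norm2 w ^+ 2 <= norm2 d * (specnorm A * norm2 w).
  rewrite w_sqr; apply: (le_trans (ler_norm _)).
  apply: (le_trans (cauchy_schwarz_norm2 _ _)).
  by apply: ler_wpM2l; [exact: norm2_ge0 | exact: norm2_mulmx_le].
have [w0|w_neq0] := eqVneq (norm2 w) 0.
  by rewrite w0 mulr_ge0 ?specnorm_ge0 ?norm2_ge0.
have w_gt0 : 0 < norm2 w by rewrite lt0r w_neq0 norm2_ge0.
by rewrite -(ler_pM2r w_gt0) -expr2 mulrAC mulrC.
Qed.

Lemma specnorm_le c : 0 <= c -> (forall x, norm2 (A *m x) <= c * norm2 x) ->
  specnorm A <= c.
Proof.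
move=> c_ge0 Ax_le; apply: ge_sup; first by exists 0; exact: image_ball0.
move=> _ [x /= x_le1 <-]; apply: (le_trans (Ax_le x)).
by rewrite -[leRHS]mulr1 ler_wpM2l.
Qed.

End Spectral_norm.

Section Schur_test.
Variables (R : realType) (m n : nat) (A : 'M[R]_(m, n)).
Hypothesis A_ge0 : forall i j, 0 <= A i j.

Lemma mulmx_onesE i : (A *m ones n) i 0 = \sum_j A i j.
Proof. by rewrite mxE; apply: eq_bigr => j _; rewrite mxE mulr1. Qed.

Lemma trmx_mulmx_onesE j : (A^T *m ones m) j 0 = \sum_i A i j.
Proof. by rewrite mxE; apply: eq_bigr => i _; rewrite !mxE mulr1. Qed.

(* Weighted Cauchy-Schwarz in each row, then bound the row and column sums. *)
Lemma schur_test (x : 'cV[R]_n) :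
  norm2 (A *m x) ^+ 2 <= vmax (A^T *m ones m) * vmax (A *m ones n) * norm2 x ^+ 2.
Proof.
rewrite !norm2_sqr.
apply: (@le_trans _ _ (\sum_i vmax (A *m ones n) * \sum_j A i j * x j 0 ^+ 2)).
  apply: ler_sum => i _; rewrite mxE.
  apply: (le_trans (cauchy_schwarz_weighted (fun j => x j 0) (A_ge0 i))).
  apply: ler_wpM2r; first by apply: sumr_ge0 => j _; rewrite mulr_ge0 ?sqr_ge0.
  by rewrite -mulmx_onesE vmax_ge.
rewrite -mulr_sumr exchange_big /= [_ * vmax _]mulrC -mulrA.
apply: ler_wpM2l; first exact: vmax_ge0.
rewrite mulr_sumr; apply: ler_sum => j _.
rewrite -mulr_suml; apply: ler_wpM2r; first exact: sqr_ge0.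
by rewrite -trmx_mulmx_onesE vmax_ge.
Qed.

Lemma specnorm_sqr_le_schur :
  specnorm A ^+ 2 <= vmax (A^T *m ones m) * vmax (A *m ones n).
Proof.
have K_ge0 : 0 <= vmax (A^T *m ones m) * vmax (A *m ones n).
  by rewrite mulr_ge0 ?vmax_ge0.
rewrite -[leRHS]sqr_sqrtr // ler_sqr ?nnegrE ?sqrtr_ge0 ?specnorm_ge0 //.
apply: specnorm_le; first exact: sqrtr_ge0.
move=> x; rewrite -ler_sqr ?nnegrE ?mulr_ge0 ?sqrtr_ge0 ?norm2_ge0 //.
by rewrite exprMn (sqr_sqrtr K_ge0); exact: schur_test.
Qed.

End Schur_test.

Section Poisson_objective.
Variables (R : realType) (m n : nat) (A : 'M[R]_(m, n)) (y : 'I_m -> nat) (beta : R).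

Definition Arow (i : 'I_m) (f : 'cV[R]_n) : R := (A *m f) i 0.

Lemma Arow_linear i : linear (Arow i).
Proof. by move=> a u v; rewrite /Arow linearP !mxE. Qed.

HB.instance Definition _ i := GRing.isLinear.Build R _ _ _ (Arow i) (Arow_linear i).

Lemma Arow_differentiable i f : differentiable (Arow i) f.
Proof.
have -> : Arow i = \sum_j A i j *: (fun f : 'cV[R]_n => f j 0).
  by apply/funext => g; rewrite fct_sumE /Arow mxE; apply: eq_bigr.
by apply: differentiable_sum => j; apply: differentiableZ; exact: differentiable_coord.
Qed.

Lemma diff_Arow i f : 'd (Arow i) f = Arow i :> ('cV[R]_n -> R).
Proof.
by apply: diff_lin => g; apply: differentiable_continuous; exact: Arow_differentiable.
Qed.

Definition poisson_loss i (x : R) : R := x - (y i)%:R * ln (x + beta).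

Definition poisson_loss' i (x : R) : R := 1 - (y i)%:R * (x + beta)^-1.

Lemma is_derive_poisson_loss i a :
  0 < a + beta -> is_derive a 1 (poisson_loss i) (poisson_loss' i a).
Proof.
move=> a_beta_gt0.
(* Never named below: [is_derive1_comp] finds [shift] by instance resolution. *)
have shift : is_derive a 1 (fun x : R => x + beta) 1.
  by rewrite -[X in is_derive _ _ _ X]addr0; apply: is_deriveD.
have log_shift : is_derive a 1 (@ln R \o (fun x : R => x + beta)) (a + beta)^-1.
  by rewrite -[X in is_derive _ _ _ X]mulr1; apply: is_derive1_comp; exact: is_derive1_ln.
exact: is_deriveB (is_derive_id _ _) (is_deriveZ ((y i)%:R) log_shift).
Qed.

Lemma poisson_loss_differentiable i a :
  0 < a + beta -> differentiable (poisson_loss i) a.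
Proof.
by move=> a_beta_gt0; apply/derivable1_diffP; case: (is_derive_poisson_loss i a_beta_gt0).
Qed.

Lemma diff_poisson_loss i a w :
  0 < a + beta -> 'd (poisson_loss i) a w = w * poisson_loss' i a.
Proof.
move=> a_beta_gt0; have -> : w = w *: (1 : R) by rewrite /GRing.scale /= mulr1.
rewrite linearZ /= -deriveE; last exact: poisson_loss_differentiable.
have loss_derive := is_derive_poisson_loss i a_beta_gt0.
by rewrite derive_val /GRing.scale /= mulr1.
Qed.

Lemma poissonFE : poissonF A y beta = \sum_i (poisson_loss i \o Arow i).
Proof. by apply/funext => f; rewrite fct_sumE /poissonF -sumrB. Qed.

Lemma poissonF_differentiable f : (forall i, 0 < Arow i f + beta) ->
  differentiable (poissonF A y beta) f.
Proof.
move=> Af_beta_gt0; rewrite poissonFE; apply: differentiable_sum => i.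
exact: differentiable_comp (Arow_differentiable i f) (poisson_loss_differentiable _ _).
Qed.

Lemma grad_poissonF f : (forall i, 0 < Arow i f + beta) ->
  grad (poissonF A y beta) f = A^T *m \col_i poisson_loss' i (Arow i f).
Proof.
move=> Af_beta_gt0; apply/matrixP => j k; rewrite (ord1 k) !mxE.
have loss_diff i : differentiable (poisson_loss i \o Arow i) f.
  exact: differentiable_comp (Arow_differentiable i f) (poisson_loss_differentiable _ _).
rewrite -deriveE; last exact: poissonF_differentiable.
rewrite poissonFE derive_sum; last by move=> i; exact: diff_derivable.
apply: eq_bigr => i _; rewrite deriveE // diff_comp /=; last 2 first.
- exact: Arow_differentiable.
- exact: poisson_loss_differentiable.
rewrite diff_poisson_loss // diff_Arow /Arow !mxE; congr (_ * _).
rewrite (bigD1 j) //= big1 ?addr0; first by rewrite mxE eqxx mulr1.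
by move=> l l_neq_j; rewrite mxE (negbTE l_neq_j) andbT mulr0.
Qed.

Hypothesis beta_gt0 : 0 < beta.

Lemma poisson_loss'_lipschitz i a b : 0 <= a -> 0 <= b ->
  `|poisson_loss' i a - poisson_loss' i b| <= (y i)%:R / beta ^+ 2 * `|a - b|.
Proof.
move=> a_ge0 b_ge0.
have a_beta_gt0 : 0 < a + beta by rewrite ltr_wpDl.
have b_beta_gt0 : 0 < b + beta by rewrite ltr_wpDl.
have -> : poisson_loss' i a - poisson_loss' i b
          = (y i)%:R * (a + beta)^-1 * (b + beta)^-1 * (a - b).
  by rewrite /poisson_loss'; field; rewrite !lt0r_neq0.
rewrite normrM ler_wpM2r // !normrM ger0_norm // !gtr0_norm ?invr_gt0 //.
rewrite -mulrA ler_wpM2l // expr2 invfM.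
by apply: ler_pM; rewrite ?invr_ge0 ?(ltW a_beta_gt0) ?(ltW b_beta_gt0) //
  lef_pV2 ?posrE ?lerDr.
Qed.

Hypothesis A_ge0 : forall i j, 0 <= A i j.

Lemma Arow_ge0 f i : nonneg_vec f -> 0 <= Arow i f.
Proof. by move=> f_ge0; rewrite /Arow mxE sumr_ge0 // => j _; rewrite mulr_ge0. Qed.

Lemma Arow_add_beta_gt0 f i : nonneg_vec f -> 0 < Arow i f + beta.
Proof. by move=> /(Arow_ge0 i) Af_ge0; rewrite ltr_wpDl. Qed.

Lemma grad_poissonF_lipschitz :
  grad_lip_on_nonneg (poissonF A y beta)
    ((\max_(i < m) y i)%N%:R / beta ^+ 2 * specnorm A ^+ 2).
Proof.
set c := _ / beta ^+ 2; have c_ge0 : 0 <= c by rewrite divr_ge0 ?sqr_ge0.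
have s_ge0 := specnorm_ge0 A.
split; first by rewrite mulr_ge0 ?sqr_ge0.
move=> f g f_ge0 g_ge0.
rewrite !grad_poissonF; try by move=> i; exact: Arow_add_beta_gt0.
rewrite -mulmxBr; set d := (_ - _)%R.
have d_le : norm2 d <= c * norm2 (A *m (f - g)).
  apply: norm2_le_pointwise => // i.
  have -> : d i 0 = poisson_loss' i (Arow i f) - poisson_loss' i (Arow i g) by rewrite !mxE.
  have -> : (A *m (f - g)) i 0 = Arow i f - Arow i g by rewrite mulmxBr !mxE /Arow !mxE.
  apply: (le_trans (poisson_loss'_lipschitz i (Arow_ge0 i f_ge0) (Arow_ge0 i g_ge0))).
  rewrite ler_wpM2r // ler_wpM2r ?invr_ge0 ?sqr_ge0 // ler_nat.
  exact: (@leq_bigmax _ (fun i => y i)).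
apply: (le_trans (norm2_trmx_mulmx_le A d)).
apply: (le_trans (ler_wpM2l s_ge0 d_le)).
apply: (le_trans (ler_wpM2l s_ge0 (ler_wpM2l c_ge0 (norm2_mulmx_le A (f - g))))).
by rewrite mulrCA !mulrA.
Qed.

End Poisson_objective.

Theorem lemma1 (R : realType) (m n : nat) (A : 'M[R]_(m, n))
  (y : 'I_m -> nat) (beta : R) :
  (forall i j, 0 <= A i j) -> 0 < beta ->
  let F := poissonF A y beta in
  let L := grad_lip_const F in
  (forall f : 'cV[R]_n, nonneg_vec f -> differentiable F f) /\
  (exists c, grad_lip_on_nonneg F c) /\
  L <= ((\max_(i < m) y i)%N%:R / beta ^+ 2) * specnorm A ^+ 2 /\
  ((\max_(i < m) y i)%N%:R / beta ^+ 2) * specnorm A ^+ 2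
    <= ((\max_(i < m) y i)%N%:R / beta ^+ 2)
       * vmax (A^T *m ones m) * vmax (A *m ones n).
Proof.
move=> A_ge0 beta_gt0 F L.
have lip := grad_poissonF_lipschitz y beta_gt0 A_ge0.
split.
  move=> f f_ge0; apply: poissonF_differentiable => i.
  exact: Arow_add_beta_gt0.
split; first by eexists; exact: lip.
split; first by apply: ge_inf lip; exists 0 => c [].
rewrite -[leRHS]mulrA; apply: ler_wpM2l; first by rewrite divr_ge0 ?sqr_ge0.
exact: specnorm_sqr_le_schur.
Qed.
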